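(* Let $f$ be a real function on $[0,1]$ satisfying $|f(x')-f(x'')|\le H|x'-x''|^{1/N}$ for all $x',x''\in[0,1]$, and let $x^*\in[0,1]$ be a global minimizer of $f$ on $[0,1]$. Apply PLT to $f$ with the stopping rule disregarded, let $\{x^q\}$ be the resulting infinite sequence of trial points, and assume $p(l)\le Q<\infty$ for all $l>1$. For each iteration $l$, let $j=j(l)$ be the index of an interval $[x_{j-1},x_j]$ (in the ordering of Step 1 at iteration $l$) containing $x^*$, and define $K_j=\max\{(z_{j-1}-f(x^* ))(x^*-x_{j-1})^{-1/N},\ (z_j-f(x^* ))(x_j-x^* )^{-1/N}\}$ and $M_j=|z_{j-1}-z_j|(x_j-x_{j-1})^{-1/N}$. Suppose there is an infinite set of iteration numbers $\{h\}$ such that for every $l\in\{h\}$ one has $4^{1-1/N}K_j^2\ge M_j^2$ and $r\mu_j\ge 2^{1-1/N}K_j+\left(4^{1-1/N}K_j^2-M_j^2\right)^{1/2}$, where $j=j(l)$. Then $x^*$ is a limit point of $\{x^q\}$.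
   Context: Algorithm PLT (parallel information algorithm with local tuning) for minimizing $f$ on $[0,1]$; parameters: integer $N\ge1$, reliability parameter $r>1$, small number $\xi>0$. A ''trial'' is an evaluation of $f$ at a point. Step 0: perform $q(1)>1$ initial trials at $x^1=0$, $x^2=1$ and some interior points $x^3,\dots,x^{q(1)}\in(0,1)$; set $l=1$. At iteration $l$, let $q=q(l)$ be the number of trials made so far. Step 1: order all trial points as $0=x_1<x_2<\dots<x_q=1$ and set $z_i=f(x_i)$. Step 2: for $2\le j\le q$ compute $\mu_j=\max\{\lambda_j,\gamma_j,\xi\}$, where $\lambda_j=\max\{|z_i-z_{i-1}|/(x_i-x_{i-1})^{1/N}: i\in I_j\}$ with $I_2=\{2,3\}$, $I_j=\{j-1,j,j+1\}$ for $3\le j\le q-1$, $I_q=\{q-1,q\}$; and $\gamma_j=\mu\,(x_j-x_{j-1})^{1/N}/(X^{\max})^{1/N}$ with $\mu=\max\{|z_i-z_{i-1}|/(x_i-x_{i-1})^{1/N}:2\le i\le q\}$ and $X^{\max}=\max\{x_i-x_{i-1}:2\le i\le q\}$. Step 3: for $2\le j\le q$ compute the characteristic $R(j)=r\mu_j(x_j-x_{j-1})^{1/N}+\frac{(z_j-z_{j-1})^2}{r\mu_j(x_j-x_{j-1})^{1/N}}-(z_j+z_{j-1})$. Step 4: choose $p=p(l+1)\le q(l)-1$ and distinct indices $t_1,\dots,t_p$ being the indices of the $p$ largest characteristics ($t_1=\arg\max\{R(i):1<i\le q\}$, $t_k=\arg\max\{R(i):1<i\le q,\ i\ne t_s, 1\le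 s\le k-1\}$); the new trial points are $x^{q+k}=\tfrac12(x_{t_k-1}+x_{t_k})-\frac{1}{2r}\left(\frac{|z_{t_k}-z_{t_k-1}|}{\mu_{t_k}}\right)^N\operatorname{sign}(z_{t_k}-z_{t_k-1})$, $1\le k\le p$. Step 5: evaluate $f$ at these $p$ points in parallel, set $q(l+1)=q(l)+p(l+1)$, $l\leftarrow l+1$, and return to Step 1. (In the paper $f(x)=\phi(y(x))$ where $y$ is a Peano-type space-filling curve mapping $[0,1]$ onto a hyperinterval $D\subset\mathbb R^N$ and $\phi$ is Lipschitz on $D$, which yields the H\''older condition above.) *)

From Stdlib Require Import Reals Lra Lia.
Open Scope R_scope.

(* a^e for a >= 0, e > 0, with the convention 0^e = 0
   (Stdlib's Rpower 0 e is exp (e * ln 0) = 1, which is wrong for us). *)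
Definition hpow (a e : R) : R :=
  if Req_EM_T a 0 then 0 else Rpower a e.

Definition Rsgn (x : R) : R :=
  if Rlt_dec 0 x then 1 else if Rlt_dec x 0 then -1 else 0.

Fixpoint rmax_up (g : nat -> R) (lo k : nat) : R :=
  match k with
  | O => g lo
  | S k' => Rmax (rmax_up g lo k') (g (lo + k)%nat)
  end.

(* max { g i : lo <= i <= hi }  (used only with lo <= hi) *)
Definition rmax_range (g : nat -> R) (lo hi : nat) : R :=
  rmax_up g lo (hi - lo).

(* In what follows y : nat -> R is the ordered list of trial points of
   Step 1, y 1 = 0 < y 2 < ... < y q = 1, and z_i = f (y i). *)

Definition slope (N : nat) (f : R -> R) (y : nat -> R) (i : nat) : R :=
  Rabs (f (y i) - f (y (i - 1)%nat)) / hpow (y i - y (i - 1)%nat) (/ INR N).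

Definition glob_mu (N : nat) (f : R -> R) (y : nat -> R) (q : nat) : R :=
  rmax_range (slope N f y) 2 q.

Definition Xmax (y : nat -> R) (q : nat) : R :=
  rmax_range (fun i => y i - y (i - 1)%nat) 2 q.

(* lambda_j = max { slope i : i in I_j }, where I_j = {j-1,j,j+1} ∩ [2,q]
   (this gives I_2 = {2,3}, I_j = {j-1,j,j+1}, I_q = {q-1,q}). *)
Definition loc_lambda (N : nat) (f : R -> R) (y : nat -> R) (q j : nat) : R :=
  rmax_range (slope N f y) (Nat.max 2 (j - 1)) (Nat.min q (j + 1)).

Definition loc_gamma (N : nat) (f : R -> R) (y : nat -> R) (q j : nat) : R :=
  glob_mu N f y q * hpow (y j - y (j - 1)%nat) (/ INR N)
    / hpow (Xmax y q) (/ INR N).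

Definition mu_j (N : nat) (xi : R) (f : R -> R) (y : nat -> R) (q j : nat) : R :=
  Rmax (Rmax (loc_lambda N f y q j) (loc_gamma N f y q j)) xi.

Definition charR (N : nat) (r xi : R) (f : R -> R) (y : nat -> R) (q j : nat) : R :=
  let d := r * mu_j N xi f y q j * hpow (y j - y (j - 1)%nat) (/ INR N) in
  d + (f (y j) - f (y (j - 1)%nat)) ^ 2 / d - (f (y j) + f (y (j - 1)%nat)).

Definition new_point (N : nat) (r xi : R) (f : R -> R) (y : nat -> R) (q j : nat) : R :=
  (y (j - 1)%nat + y j) / 2
  - / (2 * r) * (Rabs (f (y j) - f (y (j - 1)%nat)) / mu_j N xi f y q j) ^ N
      * Rsgn (f (y j) - f (y (j - 1)%nat)).

Definition is_sorted_enum (xs : nat -> R) (n : nat) (y : nat -> R) : Prop :=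
  (forall i, (1 <= i < n)%nat -> y i < y (S i)) /\
  (forall i, (1 <= i <= n)%nat -> exists k, (1 <= k <= n)%nat /\ y i = xs k) /\
  (forall k, (1 <= k <= n)%nat -> exists i, (1 <= i <= n)%nat /\ xs k = y i).

(* A run of PLT (stopping rule disregarded):
   xs k = trial point x^k (k >= 1); q l = number of trials before iteration l;
   p (l+1) = number of points chosen at iteration l; ord l = the ordering of
   Step 1 at iteration l; t l k = index t_k chosen in Step 4 at iteration l. *)
Definition PLT_run (N : nat) (r xi : R) (f : R -> R) (xs : nat -> R)
  (q p : nat -> nat) (ord : nat -> nat -> R) (t : nat -> nat -> nat) : Prop :=
  (1 < q 1%nat)%nat /\ xs 1%nat = 0 /\ xs 2%nat = 1 /\
  (forall k, (3 <= k <= q 1%nat)%nat -> 0 < xs k < 1) /\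
  forall l, (1 <= l)%nat ->
    is_sorted_enum xs (q l) (ord l) /\
    (1 <= p (S l) <= q l - 1)%nat /\
    q (S l) = (q l + p (S l))%nat /\
    (forall k, (1 <= k <= p (S l))%nat ->
       (2 <= t l k <= q l)%nat /\
       (forall s, (1 <= s < k)%nat -> t l s <> t l k) /\
       (forall i, (2 <= i <= q l)%nat ->
          (forall s, (1 <= s < k)%nat -> t l s <> i) ->
          charR N r xi f (ord l) (q l) i <= charR N r xi f (ord l) (q l) (t l k)) /\
       xs (q l + k)%nat = new_point N r xi f (ord l) (q l) (t l k)).

(* Suppose x* is not a limit point. Then no trial point comes closer to x*
   than some d > 0, so at every iteration the interval [x_{j-1}, x_j] around
   x* has length at least 2d.  Write m = f x*.  At the iterations in {h}, the
   estimates f(x_{j-1}) - m <= K_j (x* - x_{j-1})^{1/N}, its mirror image, the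
   concavity of s |-> s^{1/N} and the assumed lower bound on r mu_j give
   R(j) + 2m >= r xi (x_j - x_{j-1})^{1/N} / 2 >= r xi (2d)^{1/N} / 2.
   On the other hand the Hoelder condition gives
   R(t) + 2m <= C (x_t - x_{t-1})^{1/N} for every interval, and the
   interval t_1 of largest characteristic becomes arbitrarily short: while
   it has length >= eta, the new trial point in it lies at distance
   >= eta (1 - 1/r) / 2 from all earlier trials, which can happen only
   finitely often in [0,1].  Since R(j) <= R(t_1), this is a contradiction. *)

From Stdlib Require Import Reals Lra Lia List Classical ZArith.
Open Scope R_scope.

Lemma rmax_up_ge g lo k i : (i <= k)%nat -> g (lo + i)%nat <= rmax_up g lo k.
Proof.
  induction k as [|k IH]; intros Hi; simpl.
  - replace i with 0%nat by lia. rewrite Nat.add_0_r. lra.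
  - destruct (Nat.eq_dec i (S k)) as [->|Hne].
    + apply Rmax_r.
    + eapply Rle_trans; [apply IH; lia | apply Rmax_l].
Qed.

Lemma rmax_up_lub g lo k B :
  (forall i, (i <= k)%nat -> g (lo + i)%nat <= B) -> rmax_up g lo k <= B.
Proof.
  induction k as [|k IH]; intros H; simpl.
  - rewrite <- (Nat.add_0_r lo). apply H. lia.
  - apply Rmax_lub; [apply IH; intros; apply H; lia | apply H; lia].
Qed.

Lemma rmax_range_ge g lo hi i : (lo <= i <= hi)%nat -> g i <= rmax_range g lo hi.
Proof.
  intros H. unfold rmax_range. replace i with (lo + (i - lo))%nat at 1 by lia.
  apply rmax_up_ge. lia.
Qed.

Lemma rmax_range_lub g lo hi B : (lo <= hi)%nat ->
  (forall i, (lo <= i <= hi)%nat -> g i <= B) -> rmax_range g lo hi <= B.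
Proof.
  intros Hlo H. unfold rmax_range. apply rmax_up_lub. intros i Hi. apply H. lia.
Qed.

Lemma sorted_lt (y : nat -> R) n : (forall i, (1 <= i < n)%nat -> y i < y (S i)) ->
  forall i i', (1 <= i)%nat -> (i < i' <= n)%nat -> y i < y i'.
Proof.
  intros Hs i i' Hi Hii'. induction i' as [|i' IH]; [lia|].
  destruct (Nat.eq_dec i i') as [->|Hne].
  - apply Hs. lia.
  - apply Rlt_trans with (y i'); [apply IH; lia | apply Hs; lia].
Qed.

Lemma sorted_outside_gap (y : nat -> R) n : (forall i, (1 <= i < n)%nat -> y i < y (S i)) ->
  forall i j, (1 <= i <= n)%nat -> (2 <= j <= n)%nat -> y i <= y (j - 1)%nat \/ y j <= y i.
Proof.
  intros Hs i j Hi Hj.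
  destruct (le_lt_dec i (j - 1)) as [Hij|Hij]; [left | right].
  - destruct (Nat.eq_dec i (j - 1)) as [->|Hne]; [lra|].
    left. apply (sorted_lt y n Hs); lia.
  - destruct (Nat.eq_dec i j) as [->|Hne]; [lra|].
    left. apply (sorted_lt y n Hs); lia.
Qed.

Lemma sorted_gap_gt_0 (y : nat -> R) n : (forall i, (1 <= i < n)%nat -> y i < y (S i)) ->
  forall i, (2 <= i <= n)%nat -> 0 < y i - y (i - 1)%nat.
Proof.
  intros Hs i Hi. replace i with (S (i - 1)) at 1 by lia.
  assert (H := Hs (i - 1)%nat ltac:(lia)). lra.
Qed.

(** * Real powers *)

Lemma Rpower_gt_0 x e : 0 < Rpower x e.
Proof. apply exp_pos. Qed.

Lemma hpow_Rpower x e : 0 < x -> hpow x e = Rpower x e.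
Proof. intros Hx. unfold hpow. destruct (Req_EM_T x 0); [lra | reflexivity]. Qed.

Lemma inv_INR_gt_0 N : (1 <= N)%nat -> 0 < / INR N.
Proof. intros HN. apply Rinv_0_lt_compat, lt_0_INR. lia. Qed.

Lemma Rpower_inv_pow N x : (1 <= N)%nat -> 0 < x -> Rpower x (/ INR N) ^ N = x.
Proof.
  intros HN Hx. rewrite <- Rpower_pow by apply Rpower_gt_0.
  rewrite Rpower_mult, Rinv_l by (apply not_0_INR; lia). apply Rpower_1, Hx.
Qed.

Lemma Rpower_pow_inv N x : (1 <= N)%nat -> 0 < x -> Rpower (x ^ N) (/ INR N) = x.
Proof.
  intros HN Hx. rewrite <- Rpower_pow by exact Hx.
  rewrite Rpower_mult, Rinv_r by (apply not_0_INR; lia). apply Rpower_1, Hx.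
Qed.

Lemma pow_mean_le u v n : 0 <= u -> 0 <= v -> ((u + v) / 2) ^ n <= (u ^ n + v ^ n) / 2.
Proof.
  intros Hu Hv. induction n as [|n IH]; simpl; [lra|].
  (* Chebyshev's sum inequality for the similarly ordered pairs (u, v), (u^n, v^n). *)
  assert (Hcheb : 0 <= (u - v) * (u ^ n - v ^ n)).
  { destruct (Rle_dec u v).
    - assert (u ^ n <= v ^ n) by (apply pow_incr; lra). nra.
    - assert (v ^ n <= u ^ n) by (apply pow_incr; lra). nra. }
  apply Rle_trans with ((u + v) / 2 * ((u ^ n + v ^ n) / 2)).
  - apply Rmult_le_compat_l; lra.
  - nra.
Qed.

Lemma Rpower_inv_add_le N a b : (1 <= N)%nat -> 0 < a -> 0 < b ->
  Rpower a (/ INR N) + Rpower b (/ INR N)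
    <= Rpower 2 (1 - / INR N) * Rpower (a + b) (/ INR N).
Proof.
  intros HN Ha Hb. set (e := / INR N).
  assert (He : 0 < e) by apply inv_INR_gt_0, HN.
  set (u := Rpower a e). set (v := Rpower b e).
  assert (Hu : 0 < u) by apply Rpower_gt_0. assert (Hv : 0 < v) by apply Rpower_gt_0.
  assert (Hmean := pow_mean_le u v N (Rlt_le _ _ Hu) (Rlt_le _ _ Hv)).
  unfold u, v, e in Hmean. rewrite !Rpower_inv_pow in Hmean by assumption.
  fold e u v in Hmean.
  assert (Hroot := Rle_Rpower_l _ _ e (Rlt_le _ _ He)
                     (conj (pow_lt ((u + v) / 2) N ltac:(lra)) Hmean)).
  unfold e in Hroot. rewrite Rpower_pow_inv in Hroot by (auto; lra). fold e in Hroot.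
  unfold Rdiv in Hroot. rewrite <- Rpower_mult_distr in Hroot by lra.
  assert (Hhalf : Rpower (/ 2) e = / Rpower 2 e)
    by (unfold Rpower; rewrite ln_Rinv, <- exp_Ropp by lra; f_equal; ring).
  rewrite Hhalf in Hroot.
  replace (1 - e) with (1 + - e) by ring.
  rewrite Rpower_plus, Rpower_1, Rpower_Ropp by lra.
  lra.
Qed.

Lemma le_mul_Rpower_of_opp a c e K : a * Rpower c (- e) <= K -> a <= K * Rpower c e.
Proof.
  intros H. assert (Hc : 0 < Rpower c e) by apply Rpower_gt_0.
  rewrite Rpower_Ropp in H.
  replace a with (a * / Rpower c e * Rpower c e) by (field; lra).
  apply Rmult_le_compat_r; lra.
Qed.

(** * The characteristic of the interval containing the minimizer *)

Lemma half_le_quadratic_bound d T u A S :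
  0 <= A -> 0 < d -> T + u <= d -> 0 <= u -> u * u = T * T - A -> S <= T ->
  d / 2 <= d + A / d - S.
Proof.
  intros HA Hd HTu Hu Hu2 HS.
  assert (Hsq : 0 <= (d - T) * (d - T) - u * u + A) by nra.
  replace (d + A / d - S) with (d / 2 + ((d - T) * (d - T) - u * u + A) / (2 * d) + (T - S))
    by (rewrite Hu2; field; lra).
  assert (0 <= ((d - T) * (d - T) - u * u + A) / (2 * d))
    by (apply Rmult_le_pos; [exact Hsq | left; apply Rinv_0_lt_compat; lra]).
  lra.
Qed.

Definition Kj (N : nat) (f : R -> R) (y : nat -> R) (j : nat) (x : R) : R :=
  Rmax ((f (y (j - 1)%nat) - f x) * Rpower (x - y (j - 1)%nat) (- / INR N))
       ((f (y j) - f x) * Rpower (y j - x) (- / INR N)).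

Definition Mj (N : nat) (f : R -> R) (y : nat -> R) (j : nat) : R :=
  Rabs (f (y (j - 1)%nat) - f (y j)) * Rpower (y j - y (j - 1)%nat) (- / INR N).

Lemma Kj_nonneg N f (y : nat -> R) j x : f x <= f (y (j - 1)%nat) -> 0 <= Kj N f y j x.
Proof.
  intros Ha. eapply Rle_trans; [|apply Rmax_l].
  apply Rmult_le_pos; [lra | left; apply Rpower_gt_0].
Qed.

Lemma endpoints_sum_le N f (y : nat -> R) j x : (1 <= N)%nat ->
  y (j - 1)%nat < x < y j -> f x <= f (y (j - 1)%nat) ->
  f (y j) + f (y (j - 1)%nat) - 2 * f x
    <= Rpower 2 (1 - / INR N) * Kj N f y j x * Rpower (y j - y (j - 1)%nat) (/ INR N).
Proof.
  intros HN Hx Ha. assert (HK0 := Kj_nonneg N f y j x Ha).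
  assert (Hza : f (y (j - 1)%nat) - f x <= Kj N f y j x * Rpower (x - y (j - 1)%nat) (/ INR N))
    by (apply le_mul_Rpower_of_opp, Rmax_l).
  assert (Hzb : f (y j) - f x <= Kj N f y j x * Rpower (y j - x) (/ INR N))
    by (apply le_mul_Rpower_of_opp, Rmax_r).
  assert (Hconc := Rpower_inv_add_le N (x - y (j - 1)%nat) (y j - x) HN ltac:(lra) ltac:(lra)).
  replace (x - y (j - 1)%nat + (y j - x)) with (y j - y (j - 1)%nat) in Hconc by ring.
  apply Rmult_le_compat_l with (r := Kj N f y j x) in Hconc; [|exact HK0].
  lra.
Qed.

Lemma charR_at_minimizer_ge N r xi f (y : nat -> R) q j x :
  (1 <= N)%nat -> 0 < r -> 0 < xi -> y (j - 1)%nat < x < y j ->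
  f x <= f (y (j - 1)%nat) -> f x <= f (y j) ->
  Rpower 4 (1 - / INR N) * Kj N f y j x ^ 2 >= Mj N f y j ^ 2 ->
  r * mu_j N xi f y q j >= Rpower 2 (1 - / INR N) * Kj N f y j x
                          + sqrt (Rpower 4 (1 - / INR N) * Kj N f y j x ^ 2 - Mj N f y j ^ 2) ->
  r * xi * Rpower (y j - y (j - 1)%nat) (/ INR N) / 2 <= charR N r xi f y q j + 2 * f x.
Proof.
  intros HN Hr Hxi Hx Ha Hb HKM Hrmu.
  assert (Hsum := endpoints_sum_le N f y j x HN Hx Ha).
  assert (HK0 := Kj_nonneg N f y j x Ha).
  unfold Mj in *. set (K := Kj N f y j x) in *.
  set (e := / INR N) in *. set (a := y (j - 1)%nat) in *. set (b := y j) in *.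
  set (za := f a) in *. set (zb := f b) in *.
  set (M := Rabs (za - zb) * _) in *. set (mu := mu_j N xi f y q j) in *.
  set (D := Rpower (b - a) e) in *. set (P2 := Rpower 2 (1 - e)) in *.
  assert (HD : 0 < D) by apply Rpower_gt_0.
  assert (Hmu : xi <= mu) by apply Rmax_r.
  assert (HMD : M * D = Rabs (za - zb))
    by (unfold M, D; rewrite Rpower_Ropp; field; apply Rgt_not_eq, Rpower_gt_0).
  assert (H4 : Rpower 4 (1 - e) = P2 * P2)
    by (unfold P2; rewrite Rpower_mult_distr by lra; f_equal; ring).
  rewrite H4 in HKM, Hrmu.
  set (W := P2 * P2 * K ^ 2 - M ^ 2) in *.
  assert (HW : 0 <= W) by (unfold W; lra).
  assert (Hd : 0 < r * mu * D) by (apply Rmult_lt_0_compat; [apply Rmult_lt_0_compat|]; lra).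
  assert (Hbound := half_le_quadratic_bound (r * mu * D) (P2 * K * D) (D * sqrt W)
                      ((zb - za) ^ 2) (zb + za - 2 * f x) (pow2_ge_0 _) Hd).
  assert (Hxi_mu : r * xi * D <= r * mu * D)
    by (apply Rmult_le_compat_r; [lra | apply Rmult_le_compat_l; lra]).
  unfold charR. fold a b za zb mu e. rewrite hpow_Rpower by lra. fold D.
  enough (r * mu * D / 2 <= r * mu * D + (zb - za) ^ 2 / (r * mu * D) - (zb + za - 2 * f x))
    by lra.
  apply Hbound.
  - assert (r * mu * D >= (P2 * K + sqrt W) * D) by (apply Rmult_ge_compat_r; lra). lra.
  - apply Rmult_le_pos; [lra | apply sqrt_pos].
  - replace (D * sqrt W * (D * sqrt W)) with (D * D * (sqrt W * sqrt W)) by ring.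
    rewrite sqrt_sqrt by exact HW. unfold W.
    rewrite <- (pow2_abs (zb - za)), Rabs_minus_sym, <- HMD. ring.
  - exact Hsum.
Qed.

(** * Estimates at one iteration *)

Section Iteration.

Variables (N : nat) (xi Hc : R) (f : R -> R) (y : nat -> R) (q : nat).
Hypothesis HN : (1 <= N)%nat.
Hypothesis Hxi : 0 < xi.
Hypothesis Hhol : forall x1 x2, 0 <= x1 <= 1 -> 0 <= x2 <= 1 ->
  Rabs (f x1 - f x2) <= Hc * hpow (Rabs (x1 - x2)) (/ INR N).
Hypothesis Hsort : forall i, (1 <= i < q)%nat -> y i < y (S i).
Hypothesis Hunit : forall i, (1 <= i <= q)%nat -> 0 <= y i <= 1.

Lemma hoelder_step i : (2 <= i <= q)%nat ->
  Rabs (f (y i) - f (y (i - 1)%nat)) <= Hc * Rpower (y i - y (i - 1)%nat) (/ INR N).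
Proof.
  intros Hi. assert (Hgap := sorted_gap_gt_0 y q Hsort i Hi).
  rewrite <- hpow_Rpower, <- (Rabs_right (y i - y (i - 1)%nat)) by lra.
  apply Hhol; apply Hunit; lia.
Qed.

Lemma slope_bounds i : (2 <= i <= q)%nat -> 0 <= slope N f y i <= Hc.
Proof.
  intros Hi. assert (Hgap := sorted_gap_gt_0 y q Hsort i Hi). assert (Hstep := hoelder_step i Hi).
  unfold slope. rewrite hpow_Rpower by exact Hgap.
  assert (HD := Rpower_gt_0 (y i - y (i - 1)%nat) (/ INR N)).
  split.
  - apply Rmult_le_pos; [apply Rabs_pos | left; apply Rinv_0_lt_compat, HD].
  - apply (Rmult_le_reg_r (Rpower (y i - y (i - 1)%nat) (/ INR N))); [exact HD|].
    unfold Rdiv. rewrite Rmult_assoc, Rinv_l by lra. lra.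
Qed.

Lemma slope_le_mu_j i : (2 <= i <= q)%nat -> slope N f y i <= mu_j N xi f y q i.
Proof.
  intros Hi. eapply Rle_trans; [|apply Rmax_l]. eapply Rle_trans; [|apply Rmax_l].
  apply rmax_range_ge. lia.
Qed.

Lemma mu_j_le i : (2 <= i <= q)%nat -> mu_j N xi f y q i <= Rmax Hc xi.
Proof.
  intros Hi. apply Rmax_lub; [|apply Rmax_r]. eapply Rle_trans; [|apply Rmax_l].
  assert (Hmu : 0 <= glob_mu N f y q <= Hc).
  { split.
    - eapply Rle_trans; [apply (slope_bounds 2); lia | apply rmax_range_ge; lia].
    - apply rmax_range_lub; [lia|]. intros k Hk. apply slope_bounds. lia. }
  apply Rmax_lub.
  - apply rmax_range_lub; [lia|]. intros k Hk. apply slope_bounds. lia.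
  - (* gamma_i <= mu because the gap at i is at most X^max *)
    assert (Hgap := sorted_gap_gt_0 y q Hsort i Hi).
    assert (HX : y i - y (i - 1)%nat <= Xmax y q)
      by (apply (rmax_range_ge (fun k => y k - y (k - 1)%nat)); lia).
    unfold loc_gamma. rewrite !hpow_Rpower by lra.
    assert (Hle := Rle_Rpower_l _ _ (/ INR N) (Rlt_le _ _ (inv_INR_gt_0 N HN)) (conj Hgap HX)).
    assert (HDX := Rpower_gt_0 (Xmax y q) (/ INR N)).
    apply (Rmult_le_reg_r (Rpower (Xmax y q) (/ INR N))); [exact HDX|].
    replace (glob_mu N f y q * Rpower (y i - y (i - 1)%nat) (/ INR N)
               / Rpower (Xmax y q) (/ INR N) * Rpower (Xmax y q) (/ INR N))
      with (glob_mu N f y q * Rpower (y i - y (i - 1)%nat) (/ INR N)) by (field; lra).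
    apply Rmult_le_compat; try lra. left. apply Rpower_gt_0.
Qed.

Lemma new_point_bounds r i : 0 < r -> (2 <= i <= q)%nat ->
  (y (i - 1)%nat + y i) / 2 - (y i - y (i - 1)%nat) / (2 * r) <= new_point N r xi f y q i /\
  new_point N r xi f y q i <= (y (i - 1)%nat + y i) / 2 + (y i - y (i - 1)%nat) / (2 * r).
Proof.
  intros Hr Hi. assert (Hgap := sorted_gap_gt_0 y q Hsort i Hi).
  set (a := y (i - 1)%nat) in *. set (b := y i) in *.
  set (mu := mu_j N xi f y q i).
  assert (Hmu : xi <= mu) by apply Rmax_r.
  (* the slope bound |f b - f a| <= mu (b - a)^{1/N} keeps the shift inside the interval *)
  assert (Hw : 0 <= (Rabs (f b - f a) / mu) ^ N <= b - a).
  { assert (Hsl := slope_le_mu_j i Hi). unfold slope in Hsl.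
    rewrite hpow_Rpower in Hsl by exact Hgap. fold a b mu in Hsl.
    assert (HD := Rpower_gt_0 (b - a) (/ INR N)).
    assert (Hratio : 0 <= Rabs (f b - f a) / mu <= Rpower (b - a) (/ INR N)).
    { split; [apply Rmult_le_pos; [apply Rabs_pos | left; apply Rinv_0_lt_compat; lra]|].
      apply (Rmult_le_reg_r mu); [lra|]. unfold Rdiv. rewrite Rmult_assoc, Rinv_l by lra.
      apply (Rmult_le_reg_r (/ Rpower (b - a) (/ INR N))); [apply Rinv_0_lt_compat, HD|].
      replace (Rpower (b - a) (/ INR N) * mu * / Rpower (b - a) (/ INR N)) with mu
        by (field; lra).
      lra. }
    split; [apply pow_le; lra|].
    rewrite <- (Rpower_inv_pow N (b - a)) by assumption. apply pow_incr. exact Hratio. }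
  unfold new_point. fold a b mu.
  set (w := (Rabs (f b - f a) / mu) ^ N) in *.
  assert (Hc2 : 0 < / (2 * r)) by (apply Rinv_0_lt_compat; lra).
  assert (Hcw : / (2 * r) * w <= (b - a) / (2 * r))
    by (unfold Rdiv; rewrite (Rmult_comm (b - a)); apply Rmult_le_compat_l; lra).
  assert (0 <= / (2 * r) * w) by (apply Rmult_le_pos; lra).
  unfold Rsgn. destruct (Rlt_dec 0 _); [|destruct (Rlt_dec _ 0)]; lra.
Qed.

Lemma charR_le r i fs : 0 < r -> (2 <= i <= q)%nat -> (forall x, 0 <= x <= 1 -> fs <= f x) ->
  charR N r xi f y q i + 2 * fs
    <= (r * Rmax Hc xi + Hc ^ 2 / (r * xi)) * Rpower (y i - y (i - 1)%nat) (/ INR N).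
Proof.
  intros Hr Hi Hfs. assert (Hgap := sorted_gap_gt_0 y q Hsort i Hi).
  assert (Hstep := hoelder_step i Hi).
  assert (Hfa := Hfs _ (Hunit (i - 1) ltac:(lia))). assert (Hfb := Hfs _ (Hunit i ltac:(lia))).
  set (a := y (i - 1)%nat) in *. set (b := y i) in *.
  set (mu := mu_j N xi f y q i).
  assert (Hmu : xi <= mu <= Rmax Hc xi) by (split; [apply Rmax_r | apply mu_j_le, Hi]).
  set (D := Rpower (b - a) (/ INR N)) in *.
  assert (HD : 0 < D) by apply Rpower_gt_0.
  unfold charR. rewrite hpow_Rpower by exact Hgap. fold a b mu D.
  assert (Hsq : (f b - f a) ^ 2 <= (Hc * D) ^ 2).
  { rewrite <- (pow2_abs (f b - f a)). apply pow_incr. split; [apply Rabs_pos | exact Hstep]. }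
  assert (Hxi_mu : r * xi * D <= r * mu * D)
    by (apply Rmult_le_compat_r; [lra | apply Rmult_le_compat_l; lra]).
  assert (Hxi_D : 0 < r * xi * D) by (apply Rmult_lt_0_compat; [apply Rmult_lt_0_compat|]; lra).
  assert (Hfrac : (f b - f a) ^ 2 / (r * mu * D) <= Hc ^ 2 / (r * xi) * D).
  { apply Rle_trans with ((Hc * D) ^ 2 / (r * xi * D)).
    - apply Rmult_le_compat; [apply pow2_ge_0 | left; apply Rinv_0_lt_compat; lra | exact Hsq |].
      apply Rinv_le_contravar; lra.
    - right. field. lra. }
  assert (r * mu * D <= r * Rmax Hc xi * D)
    by (apply Rmult_le_compat_r; [lra | apply Rmult_le_compat_l; lra]).
  nra.
Qed.

End Iteration.

(** * Separated points in the unit interval *)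

Lemma same_box_close sep x x' : 0 < sep -> 0 <= x -> 0 <= x' ->
  Z.to_nat (Zfloor (x / sep)) = Z.to_nat (Zfloor (x' / sep)) -> Rabs (x - x') < sep.
Proof.
  intros Hsep Hx Hx' E.
  assert (Hinv : 0 < / sep) by (apply Rinv_0_lt_compat, Hsep).
  assert (Hz := Zfloor_lub 0 (x / sep) ltac:(apply Rmult_le_pos; lra)).
  assert (Hz' := Zfloor_lub 0 (x' / sep) ltac:(apply Rmult_le_pos; lra)).
  apply Z2Nat.inj in E; [|lia|lia].
  assert (Hb := Zfloor_bound (x / sep)). assert (Hb' := Zfloor_bound (x' / sep)).
  rewrite E in Hb.
  assert (Hclose : Rabs (x / sep - x' / sep) < 1) by (apply Rabs_def1; lra).
  replace (x - x') with ((x / sep - x' / sep) * sep) by (field; lra).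
  rewrite Rabs_mult, (Rabs_right sep) by lra.
  nra.
Qed.

Lemma NoDup_list_of_infinite (P : nat -> Prop) :
  (forall L, exists l, (L <= l)%nat /\ P l) ->
  forall m, exists ls, length ls = m /\ NoDup ls /\ Forall P ls.
Proof.
  intros Hinf m. induction m as [|m (ls & Hlen & Hnd & HP)].
  - exists nil. repeat constructor.
  - destruct (Hinf (S (list_max ls))) as (l & Hl & Pl).
    exists (l :: ls). repeat split; [simpl; lia | | constructor; assumption].
    constructor; [|exact Hnd]. intros Hin.
    assert (Hmax := proj1 (list_max_le ls (list_max ls)) (le_n _)).
    rewrite Forall_forall in Hmax. specialize (Hmax l Hin). lia.
Qed.

Lemma separated_in_unit_finite (P : nat -> Prop) (X : nat -> R) (sep : R) : 0 < sep ->
  (forall l, P l -> 0 <= X l <= 1) ->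
  (forall l l', P l -> P l' -> (l < l')%nat -> sep <= Rabs (X l' - X l)) ->
  exists L, forall l, (L <= l)%nat -> ~ P l.
Proof.
  intros Hsep HX Hfar. apply NNPP. intros Hinf.
  assert (Hinf' : forall L, exists l, (L <= l)%nat /\ P l).
  { intros L. apply NNPP. intros Hno. apply Hinf. exists L. intros l Hl Pl.
    apply Hno. exists l. auto. }
  (* place the points into the boxes [k sep, (k+1) sep) *)
  set (box := fun x => Z.to_nat (Zfloor (x / sep))).
  set (B := Z.to_nat (Zfloor (1 / sep))).
  assert (Hdiv : forall l, P l -> 0 <= X l / sep <= 1 / sep).
  { intros l Pl. destruct (HX l Pl).
    assert (0 < / sep) by (apply Rinv_0_lt_compat, Hsep).
    split; [apply Rmult_le_pos | apply Rmult_le_compat_r]; lra. }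
  assert (Hbox : forall l, P l -> (box (X l) <= B)%nat).
  { intros l Pl. destruct (Hdiv l Pl) as [H0 H1]. unfold box, B.
    assert (Hz := Zfloor_lub 0 _ H0). assert (Hle := Zfloor_le _ _ H1). lia. }
  assert (Hinj : forall l l', P l -> P l' -> box (X l) = box (X l') -> l = l').
  { intros l l' Pl Pl' E.
    assert (Hnear := same_box_close sep _ _ Hsep (proj1 (HX l Pl)) (proj1 (HX l' Pl')) E).
    destruct (Nat.lt_trichotomy l l') as [Hlt|[Heq|Hgt]]; [| exact Heq |].
    - assert (H := Hfar l l' Pl Pl' Hlt). rewrite Rabs_minus_sym in H. lra.
    - assert (H := Hfar l' l Pl' Pl Hgt). lra. }
  destruct (NoDup_list_of_infinite P Hinf' (S (S B))) as (ls & Hlen & Hnd & HP).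
  rewrite Forall_forall in HP.
  assert (Hnd' : NoDup (map (fun l => box (X l)) ls))
    by (apply NoDup_map_NoDup_ForallPairs; [intros ? ? ? ? ?; apply Hinj; auto | exact Hnd]).
  assert (Hincl : incl (map (fun l => box (X l)) ls) (seq 0 (S B))).
  { intros k Hk. apply in_map_iff in Hk. destruct Hk as (l & <- & Hl).
    apply in_seq. specialize (Hbox l (HP l Hl)). lia. }
  assert (Hcount := NoDup_incl_length Hnd' Hincl).
  rewrite length_map, length_seq in Hcount. lia.
Qed.

Lemma eventually_ge_pos_lower_bound (g : nat -> R) n eps : 0 < eps ->
  (forall k, 0 < g k) -> (forall k, (n <= k)%nat -> eps <= g k) ->
  exists d, 0 < d /\ forall k, d <= g k.
Proof.
  revert eps. induction n as [|n IH]; intros eps Heps Hpos Hge.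
  - exists eps. split; [exact Heps|]. intros k. apply Hge. lia.
  - apply (IH (Rmin eps (g n))); [apply Rmin_pos; auto | exact Hpos|].
    intros k Hk. destruct (Nat.eq_dec k n) as [->|Hne]; [apply Rmin_r|].
    eapply Rle_trans; [apply Rmin_l | apply Hge; lia].
Qed.

(** * Runs of the algorithm *)

Section Run.
#[local] Set Default Proof Using "HN Hr Hxi Hrun".

Variables (N : nat) (r xi : R) (f : R -> R) (xs : nat -> R) (q p : nat -> nat)
  (ord : nat -> nat -> R) (t : nat -> nat -> nat).
Hypothesis HN : (1 <= N)%nat.
Hypothesis Hr : 1 < r.
Hypothesis Hxi : 0 < xi.
Hypothesis Hrun : PLT_run N r xi f xs q p ord t.

Lemma inv_r_lt_1 : / r < 1.
Proof. rewrite <- Rinv_1. apply Rinv_lt_contravar; lra. Qed.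

Lemma ord_sorted_enum l : (1 <= l)%nat -> is_sorted_enum xs (q l) (ord l).
Proof. intros Hl. pose proof Hrun as (_ & _ & _ & _ & H). apply (H l Hl). Qed.

Lemma q_succ_eq l : (1 <= l)%nat -> q (S l) = (q l + p (S l))%nat.
Proof. intros Hl. pose proof Hrun as (_ & _ & _ & _ & H). apply (H l Hl). Qed.

Lemma p_succ_ge_1 l : (1 <= l)%nat -> (1 <= p (S l))%nat.
Proof. intros Hl. pose proof Hrun as (_ & _ & _ & _ & H). apply (H l Hl). Qed.

Lemma q_lt_succ l : (1 <= l)%nat -> (q l < q (S l))%nat.
Proof. intros Hl. rewrite q_succ_eq by exact Hl. assert (H := p_succ_ge_1 l Hl). lia. Qed.

Lemma q_lt_mono l l' : (1 <= l)%nat -> (l < l')%nat -> (q l < q l')%nat.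
Proof.
  intros Hl Hll'. induction l' as [|l' IH]; [lia|].
  assert (Hs := q_lt_succ l' ltac:(lia)).
  destruct (Nat.eq_dec l l') as [->|Hne]; [exact Hs|]. specialize (IH ltac:(lia)). lia.
Qed.

Lemma q_gt l : (1 <= l)%nat -> (l < q l)%nat.
Proof.
  intros Hl. induction l as [|l IH]; [lia|].
  destruct (Nat.eq_dec l 0) as [->|Hne].
  - pose proof Hrun as (H1 & _). exact H1.
  - assert (Hs := q_lt_succ l ltac:(lia)). specialize (IH ltac:(lia)). lia.
Qed.

Lemma selected_interval l k : (1 <= l)%nat -> (1 <= k <= p (S l))%nat ->
  (2 <= t l k <= q l)%nat /\ xs (q l + k)%nat = new_point N r xi f (ord l) (q l) (t l k).
Proof.
  intros Hl Hk. pose proof Hrun as (_ & _ & _ & _ & H).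
  destruct (H l Hl) as (_ & _ & _ & Ht). destruct (Ht k Hk) as (? & _ & _ & ?). auto.
Qed.

Lemma new_point_in_gap l i : (1 <= l)%nat -> (2 <= i <= q l)%nat ->
  let y := ord l in let delta := (y i - y (i - 1)%nat) * (1 - / r) / 2 in
  0 <= delta /\ y (i - 1)%nat + delta <= new_point N r xi f y (q l) i <= y i - delta.
Proof.
  intros Hl Hi y delta. destruct (ord_sorted_enum l Hl) as (Hs & _).
  assert (Hb := new_point_bounds N xi f y (q l) HN Hxi Hs r i ltac:(lra) Hi).
  assert (Hgap := sorted_gap_gt_0 y (q l) Hs i Hi).
  assert (Hr1 := inv_r_lt_1).
  assert (0 <= delta) by (apply Rmult_le_pos; [apply Rmult_le_pos|]; lra).
  replace delta with ((y i - y (i - 1)%nat) / 2 - (y i - y (i - 1)%nat) / (2 * r))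
    in * by (unfold delta; field; lra).
  lra.
Qed.

Lemma trial_in_unit_upto l : (1 <= l)%nat -> forall k, (1 <= k <= q l)%nat -> 0 <= xs k <= 1.
Proof.
  induction l as [|l IH]; intros Hl k Hk; [lia|].
  destruct (Nat.eq_dec l 0) as [->|Hl0].
  - pose proof Hrun as (_ & H1 & H2 & H3 & _).
    destruct (Nat.eq_dec k 1) as [->|]; [lra|]. destruct (Nat.eq_dec k 2) as [->|]; [lra|].
    assert (H := H3 k ltac:(lia)). lra.
  - specialize (IH ltac:(lia)).
    destruct (le_lt_dec k (q l)) as [Hkq|Hkq]; [apply IH; lia|].
    destruct (ord_sorted_enum l ltac:(lia)) as (Hs & Hord & _).
    assert (Hq := q_succ_eq l ltac:(lia)).
    destruct (selected_interval l (k - q l) ltac:(lia) ltac:(lia)) as (Hi & Hnew).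
    replace k with (q l + (k - q l))%nat by lia. rewrite Hnew.
    set (i := t l (k - q l)%nat) in *.
    assert (Hunit : forall m, (1 <= m <= q l)%nat -> 0 <= ord l m <= 1).
    { intros m Hm. destruct (Hord m Hm) as (k' & Hk' & ->). apply IH. exact Hk'. }
    assert (Hin := new_point_in_gap l i ltac:(lia) Hi).
    assert (Ha := Hunit (i - 1)%nat ltac:(lia)). assert (Hb := Hunit i ltac:(lia)).
    simpl in Hin. lra.
Qed.

Lemma ord_in_unit l i : (1 <= l)%nat -> (1 <= i <= q l)%nat -> 0 <= ord l i <= 1.
Proof.
  intros Hl Hi. destruct (ord_sorted_enum l Hl) as (_ & Hord & _).
  destruct (Hord i Hi) as (k & Hk & ->). apply (trial_in_unit_upto l Hl k Hk).
Qed.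

Lemma trial_outside_gap l j k : (1 <= l)%nat -> (2 <= j <= q l)%nat -> (1 <= k <= q l)%nat ->
  xs k <= ord l (j - 1)%nat \/ ord l j <= xs k.
Proof.
  intros Hl Hj Hk. destruct (ord_sorted_enum l Hl) as (Hs & _ & Hxs).
  destruct (Hxs k Hk) as (i & Hi & ->). apply (sorted_outside_gap _ _ Hs); assumption.
Qed.

Lemma new_trial_far l k : (1 <= l)%nat -> (1 <= k <= q l)%nat ->
  let y := ord l in let T := t l 1%nat in
  (y T - y (T - 1)%nat) * (1 - / r) / 2 <= Rabs (xs (q l + 1)%nat - xs k).
Proof.
  intros Hl Hk y T. assert (Hp := p_succ_ge_1 l Hl).
  destruct (selected_interval l 1 Hl ltac:(lia)) as (HT & ->). fold T in HT |- *.
  assert (Hin := new_point_in_gap l T Hl HT). simpl in Hin. fold y in Hin |- *.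
  destruct (trial_outside_gap l T k Hl HT Hk) as [Hout|Hout]; fold y in Hout.
  - rewrite Rabs_right; lra.
  - rewrite Rabs_left1; lra.
Qed.

Lemma selected_gap_vanishes eta : 0 < eta ->
  exists L, forall l, (L <= l)%nat -> (1 <= l)%nat ->
    ord l (t l 1%nat) - ord l (t l 1%nat - 1)%nat < eta.
Proof.
  intros Heta.
  assert (Hc : 0 < (1 - / r) / 2) by (assert (H := inv_r_lt_1); lra).
  set (Long := fun l => (1 <= l)%nat /\ eta <= ord l (t l 1%nat) - ord l (t l 1%nat - 1)%nat).
  destruct (separated_in_unit_finite Long (fun l => xs (q l + 1)%nat) (eta * ((1 - / r) / 2)))
    as (L & HL).
  - apply Rmult_lt_0_compat; assumption.
  - intros l (Hl & _). apply (trial_in_unit_upto (S l)); [lia|].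
    assert (Hs := q_lt_succ l Hl). lia.
  - intros l l' (Hl & _) (Hl' & Hlong') Hll'.
    assert (Hq := q_lt_mono l l' Hl Hll').
    assert (Hfar := new_trial_far l' (q l + 1) Hl' ltac:(lia)). simpl in Hfar. nra.
  - exists L. intros l HLl Hl. apply Rnot_le_lt. intros Hlong. apply (HL l HLl). split; assumption.
Qed.

Lemma charR_le_selected l j : (1 <= l)%nat -> (2 <= j <= q l)%nat ->
  charR N r xi f (ord l) (q l) j <= charR N r xi f (ord l) (q l) (t l 1%nat).
Proof.
  intros Hl Hj. assert (Hp := p_succ_ge_1 l Hl). pose proof Hrun as (_ & _ & _ & _ & H).
  destruct (H l Hl) as (_ & _ & _ & Ht). destruct (Ht 1%nat ltac:(lia)) as (_ & _ & Hmax & _).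
  apply Hmax; [exact Hj | intros; lia].
Qed.

Lemma not_trial_if_inside_gaps x :
  (forall n, exists l, (n <= l)%nat /\ (1 <= l)%nat /\
     exists j, (2 <= j <= q l)%nat /\ ord l (j - 1)%nat < x < ord l j) ->
  forall k, (1 <= k)%nat -> xs k <> x.
Proof.
  intros Hgaps k Hk Hx. destruct (Hgaps k) as (l & Hkl & Hl & j & Hj & Hin).
  assert (Hq := q_gt l Hl).
  destruct (trial_outside_gap l j k Hl Hj ltac:(lia)); lra.
Qed.

Lemma gap_around_far_point_ge x d l j : (forall k, (1 <= k)%nat -> d <= Rabs (xs k - x)) ->
  (1 <= l)%nat -> (2 <= j <= q l)%nat -> ord l (j - 1)%nat < x < ord l j ->
  2 * d <= ord l j - ord l (j - 1)%nat.
Proof.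
  intros Hd Hl Hj Hin. destruct (ord_sorted_enum l Hl) as (_ & Hord & _).
  destruct (Hord (j - 1)%nat ltac:(lia)) as (ka & Hka & Ea).
  destruct (Hord j ltac:(lia)) as (kb & Hkb & Eb).
  assert (Hda := Hd ka ltac:(lia)). assert (Hdb := Hd kb ltac:(lia)).
  rewrite <- Ea, Rabs_left in Hda by lra. rewrite <- Eb, Rabs_right in Hdb by lra. lra.
Qed.

Variable Hc : R.
Hypothesis Hhol : forall x1 x2, 0 <= x1 <= 1 -> 0 <= x2 <= 1 ->
  Rabs (f x1 - f x2) <= Hc * hpow (Rabs (x1 - x2)) (/ INR N).

Lemma selected_charR_vanishes fs : (forall x, 0 <= x <= 1 -> fs <= f x) ->
  forall c, 0 < c -> exists L, forall l, (L <= l)%nat -> (1 <= l)%nat ->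
    charR N r xi f (ord l) (q l) (t l 1%nat) + 2 * fs < c.
Proof using HN Hr Hxi Hrun Hhol.
  intros Hfs c Hc0.
  set (G := r * Rmax Hc xi + Hc ^ 2 / (r * xi)).
  assert (HG : 0 <= G).
  { assert (xi <= Rmax Hc xi) by apply Rmax_r.
    assert (0 <= Hc ^ 2 / (r * xi))
      by (apply Rmult_le_pos; [apply pow2_ge_0 | left; apply Rinv_0_lt_compat; nra]).
    unfold G. nra. }
  set (e0 := c / (G + 1)).
  assert (He0 : 0 < e0) by (apply Rmult_lt_0_compat; [lra | apply Rinv_0_lt_compat; lra]).
  destruct (selected_gap_vanishes (e0 ^ N) (pow_lt _ _ He0)) as (L & HL).
  exists L. intros l HLl Hl.
  destruct (ord_sorted_enum l Hl) as (Hs & _).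
  assert (Hp := p_succ_ge_1 l Hl).
  destruct (selected_interval l 1 Hl ltac:(lia)) as (HT & _).
  assert (Hub := charR_le N xi Hc f (ord l) (q l) HN Hxi Hhol Hs (fun i => ord_in_unit l i Hl)
                   r _ fs ltac:(lra) HT Hfs). fold G in Hub.
  assert (Hgap := sorted_gap_gt_0 (ord l) (q l) Hs _ HT).
  assert (HD : Rpower (ord l (t l 1%nat) - ord l (t l 1%nat - 1)%nat) (/ INR N) <= e0).
  { rewrite <- (Rpower_pow_inv N e0) by assumption.
    apply Rle_Rpower_l; [left; apply inv_INR_gt_0, HN|]. specialize (HL l HLl Hl). lra. }
  assert (HGe0 : G * e0 < c) by (unfold e0; apply (Rmult_lt_reg_r (G + 1)); [lra|];
                                 field_simplify; lra).
  assert (G * Rpower (ord l (t l 1%nat) - ord l (t l 1%nat - 1)%nat) (/ INR N) <= G * e0)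
    by (apply Rmult_le_compat_l; assumption).
  lra.
Qed.

Lemma minimizer_is_limit_point x : (forall z, 0 <= z <= 1 -> f x <= f z) ->
  (forall n, exists l, (n <= l)%nat /\ (1 <= l)%nat /\
     exists j, (2 <= j <= q l)%nat /\ ord l (j - 1)%nat < x < ord l j /\
       Rpower 4 (1 - / INR N) * Kj N f (ord l) j x ^ 2 >= Mj N f (ord l) j ^ 2 /\
       r * mu_j N xi f (ord l) (q l) j
         >= Rpower 2 (1 - / INR N) * Kj N f (ord l) j x
            + sqrt (Rpower 4 (1 - / INR N) * Kj N f (ord l) j x ^ 2 - Mj N f (ord l) j ^ 2)) ->
  forall eps, 0 < eps -> forall n, exists k, (n <= k)%nat /\ Rabs (xs k - x) < eps.
Proof using HN Hr Hxi Hrun Hhol.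
  intros Hmin Hh eps Heps n. apply NNPP. intros Hnear.
  assert (Hnot_trial := not_trial_if_inside_gaps x
    ltac:(intros m; destruct (Hh m) as (l & ? & ? & j & ? & ? & _); eauto 6)).
  destruct (eventually_ge_pos_lower_bound (fun k => Rabs (xs (S k) - x)) n eps Heps)
    as (d & Hd & Hdk).
  - intros k. apply Rabs_pos_lt, Rminus_eq_contra, Hnot_trial. lia.
  - intros k Hk. apply Rnot_lt_le. intros Hlt. apply Hnear. exists (S k). split; [lia | exact Hlt].
  - assert (Hfar : forall k, (1 <= k)%nat -> d <= Rabs (xs k - x))
      by (intros k Hk; replace k with (S (k - 1)) by lia; apply Hdk).
    set (c := r * xi * Rpower (2 * d) (/ INR N) / 2).
    assert (Hc0 : 0 < c)
      by (apply Rmult_lt_0_compat; [apply Rmult_lt_0_compat; [nra | apply Rpower_gt_0] | lra]).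
    destruct (selected_charR_vanishes (f x) Hmin c Hc0) as (L & HL).
    destruct (Hh (Nat.max L 1)) as (l & Hl & Hl1 & j & Hj & Hin & HK & HM).
    assert (Hlen := gap_around_far_point_ge x d l j Hfar Hl1 Hj Hin).
    assert (Hlb := charR_at_minimizer_ge N r xi f (ord l) (q l) j x HN ltac:(lra) Hxi Hin
      (Hmin _ (ord_in_unit l (j - 1) Hl1 ltac:(lia))) (Hmin _ (ord_in_unit l j Hl1 ltac:(lia)))
      HK HM).
    assert (Hsel := charR_le_selected l j Hl1 Hj).
    assert (Rpower (2 * d) (/ INR N) <= Rpower (ord l j - ord l (j - 1)%nat) (/ INR N))
      by (apply Rle_Rpower_l; [left; apply inv_INR_gt_0, HN | lra]).
    assert (c <= r * xi * Rpower (ord l j - ord l (j - 1)%nat) (/ INR N) / 2)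
      by (unfold c; apply Rmult_le_compat_r; [lra | apply Rmult_le_compat_l; nra]).
    specialize (HL l ltac:(lia) Hl1). lra.
Qed.

End Run.

Theorem theorem2 (N : nat) (r xi Hc : R) (f : R -> R) (xstar : R)
  (xs : nat -> R) (q p : nat -> nat) (ord : nat -> nat -> R)
  (t : nat -> nat -> nat) (Q : nat) :
  (1 <= N)%nat -> 1 < r -> 0 < xi ->
  (forall x1 x2, 0 <= x1 <= 1 -> 0 <= x2 <= 1 ->
     Rabs (f x1 - f x2) <= Hc * hpow (Rabs (x1 - x2)) (/ INR N)) ->
  0 <= xstar <= 1 ->
  (forall x, 0 <= x <= 1 -> f xstar <= f x) ->
  PLT_run N r xi f xs q p ord t ->
  (forall l, (1 < l)%nat -> (p l <= Q)%nat) ->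
  (forall n, exists l, (n <= l)%nat /\ (1 <= l)%nat /\
     exists j, (2 <= j <= q l)%nat /\
       ord l (j - 1)%nat < xstar < ord l j /\
       let y := ord l in
       let K := Rmax ((f (y (j - 1)%nat) - f xstar) * Rpower (xstar - y (j - 1)%nat) (- / INR N))
                     ((f (y j) - f xstar) * Rpower (y j - xstar) (- / INR N)) in
       let M := Rabs (f (y (j - 1)%nat) - f (y j)) * Rpower (y j - y (j - 1)%nat) (- / INR N) in
       Rpower 4 (1 - / INR N) * K ^ 2 >= M ^ 2 /\
       r * mu_j N xi f y (q l) j
         >= Rpower 2 (1 - / INR N) * K + sqrt (Rpower 4 (1 - / INR N) * K ^ 2 - M ^ 2)) ->
  forall eps, 0 < eps -> forall n, exists k, (n <= k)%nat /\ Rabs (xs k - xstar) < eps.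
Proof.
  intros HN Hr Hxi Hhol _ Hmin Hrun _ Hh.
  exact (minimizer_is_limit_point N r xi f xs q p ord t HN Hr Hxi Hrun Hc Hhol xstar Hmin Hh).
Qed.
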